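(* Let $T$ be a finite rooted unweighted tree with root $r_T$, height $h_T$ and $L_T$ leaves, and consider the Hydra game on $T$ played by the algorithm $\mathrm{HERC}$. At any time during the game, define $$\Phi = 4\, h_T\, H(\mathrm{rank}(r_T)) + \sum_{w \in T} \eta(w)\,\mathrm{level}(w).$$ Then at any time, $\Phi = O(h_T \cdot (1+\log L_T))$, i.e., there is an absolute constant $C$ such that $\Phi \le C\, h_T (1+\log L_T)$ for every such tree and at every time of the game.
   Context: Hydra game: it is played on a fixed finite rooted unweighted tree $T$ known in advance. Each node is asleep, alive, or dead. Initially the root $r_T$ is alive and all other nodes are asleep. In each step the adversary picks an alive node $w$, makes it dead, and makes all its children alive (so at all times all ancestors of alive nodes are dead and all descendants of alive nodes are asleep). The game ends when all nodes except one are dead. The algorithm must always be at an alive node; if its node is killed, it moves to an alive node $w'$ paying the tree distance $\mathrm{dist}(w,w')$ (length of the shortest path in $T$). $\mathrm{rank}(u)$ is the number of non-dead (alive or asleep) leaves in the subtree rooted at $u$; $\mathrm{level}(u)$ is the height of the subtree rooted at $u$ (leaves have level $0$, so $h_T=\mathrm{level}(r_T)$). $H(n)=\sum_{i=1}^n 1/i$ is the $n$-th harmonic number. Algorithm $\mathrm{HERC}$ maintains a probability distribution $\eta$ on nodes with $\eta(u)=\mathrm{rank}(u)/\mathrm{rank}(r_T)$ if $u$ is alive and $\eta(u)=0$ otherwise (so initially $\eta$ is $1$ at the root). *)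

From mathcomp Require Import all_boot.
From Stdlib Require Import Reals.

Set Implicit Arguments.
Unset Strict Implicit.
Unset Printing Implicit Defensive.

Section Hydra.
Variables (V : finType) (r : V) (par : V -> V).

(* A finite rooted tree on the node type V, with root r and parent map par
   (par r = r by convention): every node reaches the root by going up. *)
Definition is_rooted_tree : Prop :=
  par r = r /\ forall v : V, exists k : nat, iter k par v = r.

Definition child (u v : V) : bool := (v != r) && (par v == u).

Definition is_leaf (u : V) : bool := ~~ [exists v, child u v].

Definition anc (u v : V) : bool := [exists k : 'I_#|V|, iter k par v == u].

Definition depth (v : V) : nat := find (fun k => iter k par v == r) (iota 0 #|V|).

(* level(u) = height of the subtree rooted at u (leaves have level 0) *)
Definition level (u : V) : nat := \max_(v | anc u v) (depth v - depth u).

Definition height : nat := level r.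

Definition nleaves : nat := #|[set v | is_leaf v]|.

(* Game state: the set D of dead nodes.  A node is alive iff it is not
   dead and it is the root or its parent is dead; otherwise non-dead nodes
   are asleep. *)
Definition alive (D : {set V}) (u : V) : bool :=
  (u \notin D) && ((u == r) || (par u \in D)).

(* States reachable during the game: initially nothing is dead (root alive,
   others asleep); a step kills an alive node w (its children thereby become
   alive); the game ends when all nodes except one are dead. *)
Inductive reachable : {set V} -> Prop :=
| reach_init : reachable set0
| reach_step (D : {set V}) (w : V) :
    reachable D -> alive D w -> 2 <= #|~: D| -> reachable (w |: D).

Definition rank (D : {set V}) (u : V) : nat :=
  #|[set v | is_leaf v && anc u v && (v \notin D)]|.

Definition eta (D : {set V}) (u : V) : R :=
  if alive D u then (INR (rank D u) / INR (rank D r))%R else 0%R.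

End Hydra.

Definition harmonic (n : nat) : R := \big[Rplus/0%R]_(i < n) (/ INR i.+1)%R.

Definition Phi (V : finType) (r : V) (par : V -> V) (D : {set V}) : R :=
  (4 * INR (height r par) * harmonic (rank r par D r)
   + \big[Rplus/0%R]_(w : V) (eta r par D w * INR (level r par w)))%R.

(* HERC's distribution eta is carried by the alive nodes, whose subtrees are
   disjoint, so the ranks of the alive nodes add up to at most rank(r_T):
   eta has total mass at most 1.  As every level is at most h_T, the second
   term of Phi is at most h_T.  The first is at most 4 h_T H(L_T), because
   rank(r_T) <= L_T, and H(n) <= 1 + ln n by comparing 1/(k+1) with
   ln(k+1) - ln k.  Hence Phi <= 5 h_T (1 + ln L_T). *)

From Pilot Require Import Defs.
From HB Require Import structures.
From mathcomp Require Import all_boot.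
From Stdlib Require Import Reals Lra.

Set Implicit Arguments.
Unset Strict Implicit.
Unset Printing Implicit Defensive.

Lemma RplusA : associative Rplus.
Proof. by move=> x y z; rewrite Rplus_assoc. Qed.

HB.instance Definition _ :=
  Monoid.isComLaw.Build R 0%R Rplus RplusA Rplus_comm Rplus_0_l.

Local Open Scope R_scope.

Lemma Rle_big (I : finType) (F G : I -> R) :
  (forall i, F i <= G i) ->
  \big[Rplus/0]_(i : I) F i <= \big[Rplus/0]_(i : I) G i.
Proof.
move=> leFG; apply: (big_ind2 Rle) => //; first exact: Rle_refl.
by move=> *; apply: Rplus_le_compat.
Qed.

Lemma big_Rmult_distrl (I : finType) (F : I -> R) (c : R) :
  \big[Rplus/0]_(i : I) (F i * c) = (\big[Rplus/0]_(i : I) F i) * c.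
Proof.
symmetry; apply: (big_morph (fun x => x * c) (id1 := 0) (op1 := Rplus)).
  by move=> x y; ring.
by ring.
Qed.

Lemma INR_sum (I : finType) (F : I -> nat) :
  INR (\sum_(i : I) F i) = \big[Rplus/0]_(i : I) INR (F i).
Proof. exact: (big_morph INR plus_INR). Qed.

Lemma ln_le_sub1 (x : R) : 0 < x -> ln x <= x - 1.
Proof. by move=> x_gt0; have := exp_ineq1_le (ln x); rewrite exp_ln //; lra. Qed.

Lemma inv_le_ln_sub (n : nat) :
  (0 < n)%nat -> / INR n.+1 <= ln (INR n.+1) - ln (INR n).
Proof.
move=> n_gt0.
have n_pos : 0 < INR n by apply/lt_0_INR/ltP.
have n1_pos : 0 < INR n.+1 by apply/lt_0_INR/ltP.
have := ln_le_sub1 (Rdiv_lt_0_compat _ _ n_pos n1_pos).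
rewrite /Rdiv ln_mult ?ln_Rinv //; last exact: Rinv_0_lt_compat.
have -> : INR n * / INR n.+1 - 1 = - / INR n.+1 by rewrite S_INR; field; lra.
lra.
Qed.

(* For [n = 0] this is Stdlib's junk value [ln 0 = 0]. *)
Lemma ln_INR_ge0 (n : nat) : 0 <= ln (INR n).
Proof.
case: n => [|n].
  by rewrite /ln; case: Rlt_dec => [/Rlt_irrefl //|_]; apply: Rle_refl.
have : 1 <= INR n.+1 by rewrite S_INR; have := pos_INR n; lra.
rewrite -ln_1 => /Rle_lt_or_eq_dec [lt1n | <-]; last exact: Rle_refl.
by left; apply: ln_increasing => //; lra.
Qed.

Lemma harmonicS (n : nat) : harmonic n.+1 = harmonic n + / INR n.+1.
Proof. by rewrite /harmonic big_ord_recr. Qed.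

Lemma harmonic_le (n m : nat) : (n <= m)%nat -> harmonic n <= harmonic m.
Proof.
move=> /subnK <-; elim: (m - n)%nat => [|k IHk]; first exact: Rle_refl.
rewrite addSn harmonicS.
have : 0 < / INR (k + n).+1 by apply/Rinv_0_lt_compat/lt_0_INR/ltP.
lra.
Qed.

Lemma harmonic_le_1_ln (n : nat) : harmonic n <= 1 + ln (INR n).
Proof.
case: n => [|n]; first by have := ln_INR_ge0 0; rewrite /harmonic big_ord0; lra.
elim: n => [|n IHn]; first by rewrite harmonicS /harmonic big_ord0 /= ln_1 Rinv_1; lra.
by rewrite harmonicS; have := inv_le_ln_sub (ltn0Sn n); lra.
Qed.

Local Close Scope R_scope.

Lemma card_set_sum (T : finType) (P : pred T) : #|[set x | P x]| = \sum_x P x.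
Proof.
by rewrite -sum1_card big_mkcond; apply: eq_bigr => x _; rewrite inE; case: (P x).
Qed.

Lemma depth_root (V : finType) (r : V) (par : V -> V) : depth r par r = 0.
Proof.
rewrite /depth; have : 0 < #|V| by apply/card_gt0P; exists r.
by case: #|V| => // n _ /=; rewrite eqxx.
Qed.

Lemma rank_le_nleaves (V : finType) (r : V) (par : V -> V) D u :
  rank r par D u <= nleaves r par.
Proof.
by apply/subset_leq_card/subsetP => v; rewrite !inE => /andP [/andP [-> _] _].
Qed.

Lemma eta_ge0 (V : finType) (r : V) (par : V -> V) D u :
  (0 <= Defs.eta r par D u)%R.
Proof.
rewrite /Defs.eta; case: alive; last exact: Rle_refl.
have [-> | rk_pos] := posnP (rank r par D r); first by rewrite Rdiv_0_r; apply: Rle_refl.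
by apply: Rmult_le_pos; [apply: pos_INR | apply/Rlt_le/Rinv_0_lt_compat/lt_0_INR/ltP].
Qed.

Section RootedTree.

Variables (V : finType) (r : V) (par : V -> V).
Hypothesis tree : is_rooted_tree r par.

Lemma iter_par_root j : iter j par r = r.
Proof. by elim: j => //= j ->; exact: tree.1. Qed.

Lemma anc_root v : anc par r v.
Proof.
have [k iter_k] := tree.2 v.
have conn := fconnect_iter par k v; rewrite iter_k in conn.
apply/existsP; exists (Ordinal (leq_trans (findex_max conn) (max_card _))).
exact/eqP/(iter_findex conn).
Qed.

Lemma level_le_height w : level r par w <= height r par.
Proof.
apply/bigmax_leqP => v _; apply: leq_trans (leq_subr _ _) _.
have := leq_bigmax_cond (F := fun v => depth r par v - depth r par r) v (anc_root v).
by apply: leq_trans; rewrite depth_root subn0.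
Qed.

Section Reachable.

Variable D : {set V}.
Hypothesis reachD : reachable r par D.

Lemma dead_par_closed x : x \in D -> par x \in D.
Proof.
elim: reachD x => [|D' w _ IH alive_w _] x; first by rewrite inE.
rewrite !inE => /orP [/eqP -> | x_dead]; last by rewrite IH ?orbT.
case/andP: alive_w => _ /orP [/eqP -> | ->]; last by rewrite orbT.
by rewrite tree.1 eqxx.
Qed.

Lemma dead_iter_par_closed j x : x \in D -> iter j par x \in D.
Proof. by move=> x_dead; elim: j => //= j; apply: dead_par_closed. Qed.

(* An alive node has a dead parent and ancestors of dead nodes are dead, so
   no alive node is a proper ancestor of another one. *)
Lemma alive_anc_eq u w v :
  alive r par D u -> alive r par D w -> anc par u v -> anc par w v -> u = w.
Proof.
move=> alive_u alive_w /existsP [a /eqP va] /existsP [b /eqP vb].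
move: alive_u alive_w; rewrite -{}va -{}vb.
wlog ab : a b / a <= b.
  move=> sym; have [/sym // | /ltnW /sym sym_ba au bw] := leqP a b.
  by symmetry; apply: sym_ba.
rewrite -(subnK ab) iterD; set x := iter a par v.
case: (b - a) => [//|j] /andP [_ /orP [/eqP -> | px_dead]].
  by rewrite iter_par_root.
by rewrite iterSr /alive dead_iter_par_closed.
Qed.

Lemma sum_rank_alive_le :
  \sum_(w | alive r par D w) rank r par D w <= rank r par D r.
Proof.
rewrite /rank card_set_sum; under eq_bigr do rewrite card_set_sum.
rewrite exchange_big /=; apply: leq_sum => v _; rewrite anc_root andbT.
have [/andP [-> ->] | not_live_leaf] := boolP (is_leaf r par v && (v \notin D)).
  under eq_bigr do rewrite andbT.
  have -> : \sum_(w | alive r par D w) anc par w v =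
            #|[set w | alive r par D w && anc par w v]|.
    by rewrite card_set_sum big_mkcond; apply: eq_bigr => w _; case: alive.
  apply/card_le1_eqP => w w'; rewrite !inE => /andP [alive_w anc_w] /andP [alive_w' anc_w'].
  exact: alive_anc_eq alive_w' alive_w anc_w' anc_w.
rewrite big1 // => w _; apply/eqP; rewrite eqb0.
by apply: contra not_live_leaf => /andP [/andP [-> _] ->].
Qed.

Lemma sum_eta_le1 : (\big[Rplus/0]_(w : V) Defs.eta r par D w <= 1)%R.
Proof.
set rk := rank r par D r.
have eta_E w : Defs.eta r par D w =
    (INR (if alive r par D w then rank r par D w else 0%nat) * / INR rk)%R.
  by rewrite /Defs.eta; case: alive => //=; rewrite Rmult_0_l.
rewrite (eq_bigr _ (fun w _ => eta_E w)) big_Rmult_distrl -INR_sum -big_mkcond /=.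
have [-> | rk_pos] := posnP rk; first by rewrite Rinv_0 Rmult_0_r; lra.
have rk_gt0 : (0 < INR rk)%R by apply/lt_0_INR/ltP.
have sum_le := le_INR _ _ (leP sum_rank_alive_le).
apply: Rle_trans (Rmult_le_compat_r _ _ _ _ sum_le) _.
  exact/Rlt_le/Rinv_0_lt_compat.
by rewrite Rinv_r; [apply: Rle_refl | apply: Rgt_not_eq].
Qed.

Lemma sum_eta_level_le_height :
  (\big[Rplus/0]_(w : V) (Defs.eta r par D w * INR (level r par w))
     <= INR (height r par))%R.
Proof.
apply: Rle_trans (_ : \big[Rplus/0]_w (Defs.eta r par D w * INR (height r par)) <= _)%R.
  apply: Rle_big => w; apply/Rmult_le_compat_l; first exact: eta_ge0.
  exact/le_INR/leP/level_le_height.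
rewrite big_Rmult_distrl; have := sum_eta_le1; have := pos_INR (height r par).
nra.
Qed.

End Reachable.

End RootedTree.

Theorem lemma2 :
  exists C : R,
    forall (V : finType) (r : V) (par : V -> V),
      is_rooted_tree r par ->
      forall D : {set V}, reachable r par D ->
        (Phi r par D <= C * INR (height r par) * (1 + ln (INR (nleaves r par))))%R.
Proof.
exists 5%R => V r par tree D reachD.
set h := INR (height r par); set lnL := ln (INR (nleaves r par)).
have h_ge0 : (0 <= h)%R by apply: pos_INR.
have lnL_ge0 : (0 <= lnL)%R by apply: ln_INR_ge0.
have harmonic_rank : (harmonic (rank r par D r) <= 1 + lnL)%R.
  exact: Rle_trans (harmonic_le (rank_le_nleaves _ _ _ _)) (harmonic_le_1_ln _).
have := sum_eta_level_le_height tree reachD.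
rewrite /Phi -/h; nra.
Qed.
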